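(* Let $S\subseteq\mathbb{N}^k$ be a slice. There is a finite set $F\subseteq S$ such that $S=\bigcup_{\mathbf{u}\in F}(\mathbf{u}+M_{\mathbf{u}})$.
   Context: $\le$ is the componentwise order on $\mathbb{N}^k$; for $X\subseteq\mathbb{N}^k$, $\min X$ is the (finite) set of its minimal elements and $X^*$ the submonoid generated by $X$. A slice is a set $S\subseteq\mathbb{N}^k$ such that whenever $\mathbf{u},\mathbf{u}+\mathbf{v},\mathbf{u}+\mathbf{w}\in S$ for $\mathbf{u},\mathbf{v},\mathbf{w}\in\mathbb{N}^k$, then $\mathbf{u}+\mathbf{v}+\mathbf{w}\in S$. For $\mathbf{u}\in S$ let $S-\mathbf{u}=\{\mathbf{v}\in\mathbb{N}^k\mid\mathbf{u}+\mathbf{v}\in S\}$ and $M_{\mathbf{u}}=(\min((S-\mathbf{u})\setminus\{\mathbf{0}\}))^*$. *)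

From mathcomp Require Import all_boot.
Set Implicit Arguments. Unset Strict Implicit. Unset Printing Implicit Defensive.

Definition vec (k : nat) := {ffun 'I_k -> nat}.

Definition vzero {k} : vec k := [ffun => 0].
Definition vadd {k} (u v : vec k) : vec k := [ffun i => u i + v i].

Definition vle {k} (u v : vec k) : bool := [forall i, u i <= v i].

Definition slice {k} (S : vec k -> Prop) : Prop :=
  forall u v w : vec k, S u -> S (vadd u v) -> S (vadd u w) ->
    S (vadd (vadd u v) w).

Definition shift {k} (S : vec k -> Prop) (u : vec k) : vec k -> Prop :=
  fun v => S (vadd u v).

Definition minset {k} (X : vec k -> Prop) : vec k -> Prop :=
  fun x => X x /\ forall y, X y -> vle y x -> y = x.

Inductive genmon {k} (X : vec k -> Prop) : vec k -> Prop :=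
| genmon0 : genmon X vzero
| genmonS : forall x m, X x -> genmon X m -> genmon X (vadd x m).

Definition Mu {k} (S : vec k -> Prop) (u : vec k) : vec k -> Prop :=
  genmon (minset (fun v => shift S u v /\ v <> vzero)).

(* For u <= x in S the slice axiom gives S - u ⊆ S - x.  If moreover
   S - u = S - x, then x - u lies in M_u: peel off a minimal nonzero p <= x - u
   of S - u, note that S - (u + p) = S - u, and recurse on the rest.  So it
   suffices to find a finite F ⊆ S such that every x in S lies above some u in
   F with S - u = S - x.  Otherwise, by Dickson's lemma, a bad sequence yields
   a chain D_0 <= D_1 <= ... in S with witnesses v_m in S - D_(m+1) but not in
   S - D_m.  Take such a chain whose witnesses are minimal in the sense of
   Nash-Williams.  Dickson's lemma gives a < b_0 < b_1 < ... with
   v_a <= v_(b_0) <= v_(b_1) <= ..., and the chain that continues from b_0 with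
   D_(b_0), D_(b_0 + 1) + v_a, D_(b_1 + 1) + v_a, ... and witnesses
   v_(b_m) - v_a has a smaller witness at b_0. *)
From Stdlib Require Import Classical IndefiniteDescription.
From mathcomp Require Import all_boot.
Set Implicit Arguments. Unset Strict Implicit. Unset Printing Implicit Defensive.

Lemma ex_argmin (A : Type) (P : A -> Prop) (mu : A -> nat) :
  (exists a, P a) -> exists2 a, P a & forall b, P b -> mu a <= mu b.
Proof.
move=> [a0 Pa0]; apply: NNPP => nomin.
suff ge_mu n b : P b -> n <= mu b by have := ge_mu (mu a0).+1 a0 Pa0; rewrite ltnn.
elim: n b => [//|n IH] b Pb; rewrite ltn_neqAle IH // andbT.
by apply/eqP => mu_b; apply: nomin; exists b => // c Pc; rewrite -mu_b IH.
Qed.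

Lemma bad_sequence (T : eqType) (P : T -> Prop) (R : T -> T -> Prop) :
  ~ (exists F : seq T, (forall u, u \in F -> P u) /\
       forall x, P x -> exists2 u, u \in F & R u x) ->
  exists2 x : nat -> T, (forall n, P (x n)) & forall i j, i < j -> ~ R (x i) (x j).
Proof.
move=> nobasis.
have uncovered (F : seq T) : {in F, forall u, P u} -> exists2 x, P x & {in F, forall u, ~ R u x}.
  move=> FP; apply: NNPP => nox; apply: nobasis; exists F; split=> // x Px.
  by apply: NNPP => nou; apply: nox; exists x => // u uF Rux; apply: nou; exists u.
have [//|x0 Px0 _] := uncovered [::].
have choose (F : seq T) : exists x, {in F, forall u, P u} ->
    P x /\ {in F, forall u, ~ R u x}.
  case: (classic {in F, forall u, P u}) => [/uncovered [x Px Fx] | FnP].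
    by exists x.
  by exists x0 => /FnP.
have [pick pickP] := functional_choice _ choose.
pose prefix := fix prefix n := if n is m.+1 then pick (prefix m) :: prefix m else [::].
have prefixP n : {in prefix n, forall u, P u}.
  elim: n => [//|n IH] u /=; rewrite in_cons => /predU1P [->|]; last exact: IH.
  exact: (pickP _ IH).1.
exists (fun n => pick (prefix n)) => [n|i j lt_ij]; first exact: (pickP _ (prefixP n)).1.
apply: (pickP _ (prefixP j)).2.
elim: j lt_ij => // j IH; rewrite ltnS leq_eqVlt => /predU1P [->|/IH].
  exact: mem_head.
by rewrite /= in_cons => ->; rewrite orbT.
Qed.

Section Chains.
Variables (X : Type) (L : X -> X -> Prop).

Definition chain (s : nat -> X) := forall n, L (s n) (s n.+1).

Lemma chain_splice (s t : nat -> X) n :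
  chain s -> chain t -> (0 < n -> L (s n.-1) (t 0)) ->
  chain (fun i => if i < n then s i else t (i - n)).
Proof.
move=> chain_s chain_t join i /=; case: (ltnP i.+1 n) => [lt_i1n | le_ni1].
  by rewrite (ltn_trans (ltnSn i) lt_i1n).
case: (ltnP i n) => [lt_in | le_ni]; last by rewrite subSn.
have n_eq : n = i.+1 by apply/eqP; rewrite eqn_leq lt_in le_ni1.
by move: join; rewrite n_eq subnn; apply.
Qed.

Variable mu : X -> nat.

Lemma minimal_chain s0 : chain s0 -> exists2 s, chain s &
  forall n t, chain t -> (forall i, i < n -> t i = s i) -> mu (s n) <= mu (t n).
Proof.
move=> chain_s0.
pose agree n (p t : nat -> X) := forall i, i < n -> t i = p i.
have extend (pn : {p | chain p} * nat) : exists q : {p | chain p},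
    agree pn.2 (sval pn.1) (sval q) /\
    forall t, chain t -> agree pn.2 (sval pn.1) t -> mu (sval q pn.2) <= mu (t pn.2).
  case: pn => -[p chain_p] n.
  have [t [chain_t agree_t] min_t] := ex_argmin (fun t => mu (t n))
    (ex_intro (fun t => chain t /\ agree n p t) p (conj chain_p (fun _ _ => erefl))).
  by exists (exist _ t chain_t); split=> // t' *; apply: min_t.
have [next nextP] := functional_choice _ extend.
(* [seqs n] minimizes [mu] at [n] among the chains extending [seqs n.-1] below
   [n]; the minimal chain is the diagonal. *)
pose seqs := fix seqs n := next (if n is m.+1 then seqs m else exist _ s0 chain_s0, n).
pose prev n := if n is m.+1 then seqs m else exist _ s0 chain_s0.
have seqsE n : seqs n = next (prev n, n) by case: n.
have stable m n i : i <= m <= n -> sval (seqs n) i = sval (seqs m) i.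
  move=> /andP [le_im]; elim: n => [|n IH]; first by rewrite leqn0 => /eqP ->.
  rewrite leq_eqVlt => /predU1P [-> //|]; rewrite ltnS => le_mn.
  rewrite -(IH le_mn) seqsE; apply: (nextP _).1.
  exact: leq_trans le_im le_mn.
have prevE n i : i < n -> sval (prev n) i = sval (seqs i) i.
  by case: n => // n lt_in; apply: stable; rewrite leqnn.
exists (fun n => sval (seqs n) n) => [n | n t chain_t agree_t].
  by rewrite /= -(stable n n.+1 n) ?leqnn ?leqnSn //; apply: (svalP (seqs n.+1)).
rewrite seqsE; apply: (nextP _).2 => // i lt_in /=.
by rewrite agree_t // prevE.
Qed.

End Chains.

Lemma nat_monotone_subseq (g : nat -> nat) :
  exists2 phi : nat -> nat, {homo phi : m n / m < n} &
    forall n, g (phi n) <= g (phi n.+1).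
Proof.
have argmin_from n : exists m, n <= m /\ forall j, n <= j -> g m <= g j.
  have [m le_nm min_m] := ex_argmin g (ex_intro (leq n) n (leqnn n)).
  by exists m.
have [m mP] := functional_choice _ argmin_from.
have min_m x j : m x <= j -> g (m x) <= g j.
  by move=> le_mj; apply: (mP x).2; exact: leq_trans (mP x).1 le_mj.
pose phi n := iter n (fun x => m x.+1) (m 0).
have phiS n : phi n < phi n.+1 by exact: (mP _).1.
exists phi => [|n]; first exact: homo_ltn ltn_trans phiS.
by case: n => [|n]; apply: min_m; exact: ltnW (phiS _).
Qed.

Section Vectors.
Variable k : nat.
Implicit Types u v w : vec k.

Definition vsub u v : vec k := [ffun i => u i - v i].
Definition vsize u : nat := \sum_(i < k) u i.

Lemma vaddC u v : vadd u v = vadd v u.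
Proof. by apply/ffunP => i; rewrite !ffunE addnC. Qed.

Lemma vaddA u v w : vadd u (vadd v w) = vadd (vadd u v) w.
Proof. by apply/ffunP => i; rewrite !ffunE addnA. Qed.

Lemma vadd0 u : vadd u vzero = u.
Proof. by apply/ffunP => i; rewrite !ffunE addn0. Qed.

Lemma vleP u v : reflect (forall i, u i <= v i) (vle u v).
Proof. exact: forallP. Qed.

Lemma vle_refl u : vle u u.
Proof. exact/vleP. Qed.

Lemma vle_trans : transitive (@vle k).
Proof. by move=> v u w /vleP le_uv /vleP le_vw; apply/vleP => i; exact: leq_trans. Qed.

Lemma vle_addr u v : vle u (vadd u v).
Proof. by apply/vleP => i; rewrite ffunE leq_addr. Qed.

Lemma vle_add2l u v w : vle (vadd u v) (vadd u w) = vle v w.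
Proof. by apply: eq_forallb => i; rewrite !ffunE leq_add2l. Qed.

Lemma vle_add2r u v w : vle (vadd v u) (vadd w u) = vle v w.
Proof. by rewrite ![vadd _ u]vaddC vle_add2l. Qed.

Lemma vsubKC u v : vle u v -> vadd u (vsub v u) = v.
Proof. by move=> /vleP le_uv; apply/ffunP => i; rewrite !ffunE subnKC. Qed.

Lemma vsize_add u v : vsize (vadd u v) = vsize u + vsize v.
Proof. by rewrite /vsize -big_split; apply: eq_bigr => i _; rewrite ffunE. Qed.

Lemma vsize_sub u v : vle u v -> vsize (vsub v u) = vsize v - vsize u.
Proof. by move=> le_uv; rewrite -{2}(vsubKC le_uv) vsize_add addKn. Qed.

Lemma vsize_eq0 u : (vsize u == 0) = (u == vzero).
Proof.
rewrite /vsize sum_nat_eq0; apply/forall_inP/eqP => [u0 | -> i _]; last by rewrite ffunE.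
by apply/ffunP => i; rewrite ffunE; apply/eqP/u0.
Qed.

Lemma vle_vsize_eq u v : vle u v -> vsize v <= vsize u -> u = v.
Proof.
move=> le_uv; rewrite -subn_eq0 -vsize_sub // vsize_eq0 => /eqP diff0.
by rewrite -(vsubKC le_uv) diff0 vadd0.
Qed.

Lemma minset_below (X : vec k -> Prop) x :
  X x -> exists2 p, minset X p & vle p x.
Proof.
move=> Xx; have [p [Xp le_px] min_p] :=
  ex_argmin vsize (ex_intro (fun p => X p /\ vle p x) x (conj Xx (vle_refl x))).
exists p => //; split=> // y Xy le_yp; apply: vle_vsize_eq => //.
by apply: min_p; split=> //; exact: vle_trans le_px.
Qed.

Lemma dickson (f : nat -> vec k) :
  exists2 phi : nat -> nat, {homo phi : m n / m < n} &
    forall n, vle (f (phi n)) (f (phi n.+1)).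
Proof.
suff coords j : exists2 phi : nat -> nat, {homo phi : m n / m < n} &
    forall n (i : 'I_k), i < j -> f (phi n) i <= f (phi n.+1) i.
  by have [phi incr_phi mono] := coords k; exists phi => // n; apply/vleP => i; exact: mono.
elim: j => [|j [phi incr_phi mono]]; first by exists id.
case: (ltnP j k) => [lt_jk | le_kj]; last first.
  by exists phi => // n i _; apply: mono; exact: leq_trans (ltn_ord i) le_kj.
have [psi incr_psi mono_j] := nat_monotone_subseq (fun n => f (phi n) (Ordinal lt_jk)).
exists (phi \o psi) => [m n lt_mn | n i]; first exact/incr_phi/incr_psi.
rewrite ltnS leq_eqVlt => /predU1P [i_j | lt_ij].
  by rewrite (_ : i = Ordinal lt_jk); [exact: mono_j | exact: val_inj].
apply: (homo_leq (f := fun n => f (phi n) i) (r := leq)) => //; last exact/ltnW/incr_psi.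
  exact: leq_trans.
by move=> m; exact: mono.
Qed.

Lemma Mu_ext (S : vec k -> Prop) u x m :
  (forall w, S (vadd u w) <-> S (vadd x w)) -> Mu S u m -> Mu S x m.
Proof.
move=> equx; elim=> [|y m' [[Suy y0] min_y] _ IH]; first exact: genmon0.
apply: genmonS IH; split=> [|z [Sxz z0]]; first by split=> //; apply/equx.
by apply: min_y; split=> //; apply/equx.
Qed.

End Vectors.

Section Slice.
Variables (k : nat) (S : vec k -> Prop).
Hypothesis sliceS : slice S.

Lemma slice_mono a b w : S a -> S b -> vle a b -> S (vadd a w) -> S (vadd b w).
Proof.
move=> Sa Sb le_ab Saw; have := @sliceS a w (vsub b a) Sa Saw.
by rewrite vsubKC // -vaddA [vadd w _]vaddC vaddA vsubKC //; apply.
Qed.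

Lemma Mu_slice u m : S u -> Mu S u m -> S (vadd u m).
Proof.
move=> Su; elim=> [|x m' [[Sux _] _] _ Sum']; first by rewrite vadd0.
by rewrite vaddA; exact: sliceS.
Qed.

Definition shift_equiv u x := forall w, S (vadd u w) <-> S (vadd x w).

Lemma Mu_shift_equiv u d : S u -> shift_equiv u (vadd u d) -> Mu S u d.
Proof.
have [n] := ubnP (vsize d); elim: n => // n IH in u d *; rewrite ltnS => le_dn Su equ.
have [->|/eqP d0] := eqVneq d vzero; first exact: genmon0.
have Sud : S (vadd u d) by have := (equ vzero).1; rewrite !vadd0; apply.
have [p min_p le_pd] :=
  minset_below (X := fun v => shift S u v /\ v <> vzero) (conj Sud d0).
have [[Sup p0] _] := min_p.
have equp : shift_equiv u (vadd u p).
  move=> w; split=> [|Supw]; first exact: slice_mono (vle_addr u p).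
  by apply/equ; apply: slice_mono Supw => //; rewrite vle_add2l.
rewrite -(vsubKC le_pd); apply: genmonS min_p _.
apply: Mu_ext (fun w => iff_sym (equp w)) _; apply: IH => //.
- rewrite vsize_sub // (leq_trans _ le_dn) // ltn_subrL !lt0n !vsize_eq0.
  by apply/andP; split; apply/eqP.
- move=> w; rewrite -[vadd (vadd u p) (vsub d p)]vaddA vsubKC //.
  by split=> [/equp/equ | /equ/equp].
Qed.

(* A chain of [gap] is a chain D_0 <= D_1 <= ... in S with witnesses v_m,
   stored as the pairs (D_m, v_m). *)
Definition gap (a b : vec k * vec k) :=
  [/\ S a.1, vle a.1 b.1, S (vadd b.1 a.2) & ~ S (vadd a.1 a.2)].

Section GapChain.
Variable s : nat -> vec k * vec k.
Hypothesis gap_s : chain gap s.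
Let D n := (s n).1.
Let v n := (s n).2.

Lemma gap_S n : S (D n).
Proof. by case: (gap_s n). Qed.

Lemma gap_le m n : m <= n -> vle (D m) (D n).
Proof.
apply: (homo_leq (f := D) (r := fun a b => vle a b)); first exact: vle_refl.
  exact: vle_trans.
by move=> i; case: (gap_s i).
Qed.

Lemma gap_transport m n w : m <= n -> S (vadd (D m) w) -> S (vadd (D n) w).
Proof. by move=> le_mn; apply: slice_mono (gap_S m) (gap_S n) (gap_le le_mn). Qed.

Lemma gap_witness_gt0 n : 0 < vsize (v n).
Proof.
rewrite lt0n vsize_eq0; apply/eqP => v0; case: (gap_s n) => Sn _ _; apply.
by have -> : (s n).2 = vzero := v0; rewrite vadd0.
Qed.

(* The chain D_(b_0), D_(b_0 + 1) + v_a, ... of the proof idea, for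
   a = phi 0 and b_m = phi m.+1. *)
Let gap_tail (phi : nat -> nat) m :=
  (if m is 0 then D (phi 1) else vadd (D (phi m).+1) (v (phi 0)),
   vsub (v (phi m.+1)) (v (phi 0))).

Lemma gap_chain_tail (phi : nat -> nat) :
  {homo phi : m n / m < n} -> (forall n, vle (v (phi n)) (v (phi n.+1))) ->
  chain gap (gap_tail phi).
Proof.
move=> incr_phi mono_v m.
have le_va n : vle (v (phi 0)) (v (phi n)).
  exact: (homo_leq (f := v \o phi) (r := fun a b => vle a b) (@vle_refl k) (@vle_trans k)
            mono_v (leq0n n)).
have vaK x n : vadd (vadd x (v (phi 0))) (vsub (v (phi n)) (v (phi 0))) = vadd x (v (phi n)).
  by rewrite -vaddA vsubKC.
have Sa : S (vadd (D (phi 0).+1) (v (phi 0))) by case: (gap_s (phi 0)).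
have lt_phi0 n : phi 0 < phi n.+1 := incr_phi _ _ (ltn0Sn n).
split=> /=.
- case: m => [|m]; first exact: gap_S.
  by apply: gap_transport Sa; rewrite ltnS ltnW.
- case: m => [|m]; first exact: vle_trans (gap_le (leqnSn _)) (vle_addr _ _).
  by rewrite vle_add2r; apply: gap_le; rewrite ltnS ltnW // incr_phi.
- by rewrite vaK; case: (gap_s (phi m.+1)).
- move=> Sm; case: (gap_s (phi m.+1)) => _ _ _; apply.
  case: m Sm => [|m] Sm.
    have Sba : S (vadd (D (phi 1)) (v (phi 0))) by apply: gap_transport Sa.
    by rewrite -(vaK _ 1); exact: sliceS (gap_S _) Sba Sm.
  by move: Sm; rewrite vaK; apply: (gap_transport (n := phi m.+2)); rewrite incr_phi.
Qed.

Lemma gap_chain_shrink : exists2 t, chain gap t &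
  exists n, (forall i, i < n -> t i = s i) /\ vsize (t n).2 < vsize (s n).2.
Proof.
have [phi incr_phi mono_v] := dickson v.
have phi1_gt0 : 0 < phi 1 by apply: leq_ltn_trans (incr_phi 0 1 isT).
exists (fun i => if i < phi 1 then s i else gap_tail phi (i - phi 1)).
  apply: chain_splice gap_s (gap_chain_tail incr_phi mono_v) _ => _.
  by have := gap_s (phi 1).-1; rewrite prednK.
exists (phi 1); split=> [i -> //|]; rewrite ltnn subnn /= vsize_sub ?mono_v //.
by rewrite ltn_subrL !gap_witness_gt0.
Qed.

End GapChain.

Lemma no_gap_chain s : ~ chain gap s.
Proof.
move=> /(minimal_chain (fun p => vsize p.2)) [s' gap_s' min_s'].
have [t gap_t [n [agree_t lt_t]]] := gap_chain_shrink gap_s'.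
by have := min_s' n t gap_t agree_t; rewrite leqNgt lt_t.
Qed.

Lemma finite_basis : exists F : seq (vec k), (forall u, u \in F -> S u) /\
  forall x, S x -> exists2 u, u \in F & vle u x /\ shift_equiv u x.
Proof.
apply: NNPP => /bad_sequence [x Sx bad].
have [phi incr_phi mono_x] := dickson x.
have witness m : exists w, S (vadd (x (phi m.+1)) w) /\ ~ S (vadd (x (phi m)) w).
  apply: NNPP => nowit; apply: (bad _ _ (incr_phi _ _ (ltnSn m))); split=> // w.
  split; first exact: slice_mono (mono_x m).
  by move=> Sw; apply: NNPP => nSw; apply: nowit; exists w.
have [v vP] := functional_choice _ witness.
apply: (@no_gap_chain (fun m => (x (phi m), v m))) => m.
by case: (vP m) => Sw nSw; split=> //; [exact: Sx | exact: mono_x].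
Qed.

End Slice.

Unset Implicit Arguments.
Theorem lemma6 (k : nat) (S : vec k -> Prop) :
  slice S ->
  exists F : seq (vec k),
    (forall u, u \in F -> S u) /\
    (forall x : vec k,
        S x <-> exists2 u, u \in F & exists m, Mu S u m /\ x = vadd u m).
Proof.
move=> sliceS; have [F [FS basisF]] := finite_basis sliceS.
exists F; split=> // x; split=> [Sx | [u uF [m [Mum ->]]]]; last exact: Mu_slice (FS u uF) Mum.
have [u uF [le_ux equx]] := basisF x Sx.
have equ : shift_equiv S u (vadd u (vsub x u)) by rewrite vsubKC.
exists u => //; exists (vsub x u); split; last by rewrite vsubKC.
exact (Mu_shift_equiv sliceS (FS u uF) equ).
Qed.
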